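(* Let $(X,w)$ be the Euclidean tight $6$-design of $\mathbb{R}^{22}$ with $X=X_1\cup X_2$, where $X_1$ ($275$ points) lies on the unit sphere and $X_2$ ($2025$ points) lies on the sphere of radius $\sqrt{11}$ centered at the origin. Put $a_1=\frac{2}{\sqrt5}$, $b_1=\frac1{\sqrt5}$, $a_2=\frac{2}{3\sqrt5}$, $b_2=\frac{1}{3\sqrt5}$ and define subsets of $\mathbb{R}^{23}=\mathbb{R}^{22}\times\mathbb{R}$: $Z_{\pm1}=\{\pm(a_1x,b_1):x\in X_1\}$, $Z_{\pm2}=\{\pm(a_2x,b_2):x\in X_2\}$. Then $Z=Z_{+1}\cup Z_{+2}\cup Z_{-1}\cup Z_{-2}$ consists of $4600$ points on the unit sphere $S^{22}$ and is a spherical tight $7$-design.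
   Context: A Euclidean tight $6$-design of $\mathbb{R}^{22}$ is a weighted finite set $(X,w)$, $w>0$, supported by concentric spheres $S_i$ centered at the origin, $X_i=X\cap S_i$, $w(X_i)=\sum_{x\in X_i}w(x)$, with $\sum_i\frac{w(X_i)}{|S_i|}\int_{S_i}f\,d\sigma_i=\sum_{x\in X}w(x)f(x)$ for all polynomials $f$ of degree at most $6$ and $|X|=\binom{25}{3}=2300$; such a design with $|X_1|=275$ exists, is unique up to similarity, and has radius ratio $\sqrt{11}$. A spherical $t$-design is a finite nonempty $Z\subset S^{d-1}$ such that the average of $f$ over $Z$ equals its average over $S^{d-1}$ for every polynomial $f$ of degree at most $t$; a spherical $(2e+1)$-design in $S^{d-1}$ has at least $2\binom{d+e-1}{e}$ points, and it is tight if equality holds (for $d=23$, $e=3$ this number is $4600$). *)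

From HB Require Import structures.
From mathcomp Require Import all_boot all_order all_algebra.
Set Implicit Arguments. Unset Strict Implicit. Unset Printing Implicit Defensive.
Import Order.TTheory GRing.Theory Num.Theory.
Local Open Scope ring_scope.

Section Defs.
Variable R : rcfType.
Variable d : nat.

Definition mexp := {ffun 'I_d -> nat}.
Definition mdeg (a : mexp) : nat := (\sum_(i < d) a i)%N.

(* a polynomial in d variables: finite list of (coefficient, monomial) *)
Definition mpoly := seq (R * mexp).
Definition mono_eval (a : mexp) (x : 'rV[R]_d) : R := \prod_(i < d) x ord0 i ^+ a i.
Definition peval (p : mpoly) (x : 'rV[R]_d) : R := \sum_(m <- p) m.1 * mono_eval m.2 x.
Definition pdeg_le (p : mpoly) (t : nat) : bool := all (fun m => (mdeg m.2 <= t)%N) p.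

(* double factorial n!! (with 0!! = 1!! = 1) *)
Fixpoint dfact (n : nat) : nat :=
  match n with 0 | 1 => 1%N | (k.+2) as m => (m * dfact k)%N end.

(* normalized surface-measure average over the unit sphere S^{d-1} of x^a:
   0 unless all exponents even, otherwise prod (a_i - 1)!! / (d (d+2) ... (d+|a|-2)) *)
Definition sphere_mono_avg (a : mexp) : R :=
  if [forall i, ~~ odd (a i)]
  then (\prod_(i < d) dfact (a i).-1)%:R / \prod_(j < (mdeg a)./2) (d + 2 * j)%:R
  else 0.

(* (1/|S_r|) * integral over the sphere of radius r of p = average of u |-> p(r u) over S^{d-1} *)
Definition sphere_avg_r (r : R) (p : mpoly) : R :=
  \sum_(m <- p) m.1 * r ^+ mdeg m.2 * sphere_mono_avg m.2.

Definition sqnorm (x : 'rV[R]_d) : R := \sum_(i < d) x ord0 i ^+ 2.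
Definition on_sphere (r : R) (x : 'rV[R]_d) : bool := sqnorm x == r ^+ 2.

Definition spherical_design (t : nat) (Z : seq 'rV[R]_d) : Prop :=
  [/\ Z != [::], uniq Z, all (on_sphere 1) Z &
      forall p : mpoly, pdeg_le p t ->
        (\sum_(z <- Z) peval p z) / (size Z)%:R = sphere_avg_r 1 p].

Definition tight_spherical_design (e : nat) (Z : seq 'rV[R]_d) : Prop :=
  spherical_design (2 * e + 1) Z /\ size Z = (2 * 'C(d + e - 1, e))%N.

(* Euclidean t-design: S is the list of (radius r_i, X_i), X = union of the X_i *)
Definition euclidean_design (t : nat) (S : seq (R * seq 'rV[R]_d))
    (w : 'rV[R]_d -> R) : Prop :=
  let X := flatten (map snd S) in
  [/\ uniq X, uniq (map fst S) && all (fun s => 0 <= s.1) S,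
      all (fun s => all (on_sphere s.1) s.2) S,
      (forall x, x \in X -> 0 < w x) &
      forall p : mpoly, pdeg_le p t ->
        \sum_(s <- S) (\sum_(x <- s.2) w x) * sphere_avg_r s.1 p
        = \sum_(x <- X) w x * peval p x].

End Defs.

(* the point (a x, b) of R^23 = R^22 x R *)
Definition ext23 (R : rcfType) (x : 'rV[R]_22) (a b : R) : 'rV[R]_23 :=
  \row_(i < 23) (if (i < 22)%N then a * x ord0 (inord i) else b).

From HB Require Import structures.
From mathcomp Require Import all_boot all_order all_algebra.
From mathcomp Require Import ring lra.
Import Order.TTheory GRing.Theory Num.Theory.
Local Open Scope ring_scope.
Set Implicit Arguments. Unset Strict Implicit. Unset Printing Implicit Defensive.

(* The weights of the design are forced.  For a point x of either layer, the square
   of its annihilator polynomial q_x, a cubic in |y|^2 and <x, y>, has degree 6,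
   so w(x) q_x(x)^2 is bounded by the design's exact value of the integral of
   q_x^2.  Summing over each layer gives two linear inequalities between the
   layer weights that hold only when W1 = 99 W2 and every bound is sharp, so w
   is constant on each layer.  Then a monomial y^a t^k of R^23 sums over Z to 0
   in odd degree (Z is antipodal) and otherwise to
   2 (a1^j b1^k S1 + a2^j b2^k S2), j = |a|, where S_i is the sum of y^a over
   X_i; the design identities for y^a and |y|^2 y^a determine S1 and S2 from
   the average of y^a over S^21, and averages over S^22 factor through those
   over S^21.  Averages of zonal polynomials come from the recursion for the
   moments of <x, u> obtained by integration by parts on the sphere. *)

Lemma expr_even (R : comPzRingType) (r c : R) j : r ^+ 2 = c -> ~~ odd j -> r ^+ j = c ^+ j./2.
Proof. by move=> r2 j_even; rewrite -{1}(odd_double_half j) (negbTE j_even) -mul2n exprM r2. Qed.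

Lemma expr_div_mul_even (F : fieldType) (c s : F) j k : s != 0 -> ~~ odd (j + k) ->
  (c / s) ^+ j * (1 / s) ^+ k = c ^+ j / (s ^+ 2) ^+ ((j + k)./2).
Proof.
move=> s_neq0 jk_even; rewrite -(expr_even (erefl (s ^+ 2))) // !expr_div_n expr1n exprD.
by field; rewrite !expf_neq0.
Qed.

Section Polynomials.
Variable R : rcfType.
Variable d : nat.
Local Notation mexp := (mexp d).
Local Notation mpoly := (mpoly R d).

Definition mexp0 : mexp := [ffun _ => 0%N].
Definition mexp_add (a b : mexp) : mexp := [ffun i => (a i + b i)%N].
Definition mexp_unit (l : 'I_d) : mexp := [ffun i => nat_of_bool (i == l)].
Definition mexp_dec (l : 'I_d) (a : mexp) : mexp :=
  [ffun i => if i == l then (a i).-1 else a i].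

(* Both [peval _ x] and [sphere_avg_r r] are of this form. *)
Definition mlin (f : mexp -> R) (p : mpoly) : R := \sum_(m <- p) m.1 * f m.2.

Definition pone : mpoly := [:: (1, mexp0)].
Definition pmul (p q : mpoly) : mpoly :=
  [seq (m.1 * m'.1, mexp_add m.2 m'.2) | m <- p, m' <- q].
Definition pscale (c : R) (p : mpoly) : mpoly := [seq (c * m.1, m.2) | m <- p].
Definition pderiv (l : 'I_d) (p : mpoly) : mpoly :=
  [seq (m.1 * (m.2 l)%:R, mexp_dec l m.2) | m : R * mexp <- p].
Definition plin (x : 'rV[R]_d) : mpoly :=
  [seq (x ord0 i, mexp_unit i) | i <- index_enum 'I_d].
Definition psqnorm : mpoly :=
  [seq (1, mexp_add (mexp_unit i) (mexp_unit i)) | i <- index_enum 'I_d].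
Definition ppow (x : 'rV[R]_d) (k : nat) : mpoly := iter k (pmul (plin x)) pone.
Definition psqnorm_mul (m : nat) (p : mpoly) : mpoly := iter m (pmul psqnorm) p.
Definition pzonal (x : 'rV[R]_d) (m i : nat) : mpoly := psqnorm_mul m (ppow x i).
Definition pmono (a : mexp) : mpoly := [:: (1, a)].
Definition homog (k : nat) (p : mpoly) : bool := all (fun m => mdeg m.2 == k) p.

Lemma mexp_addA (a b c : mexp) : mexp_add (mexp_add a b) c = mexp_add a (mexp_add b c).
Proof. by apply/ffunP => i; rewrite !ffunE addnA. Qed.

Lemma mexp_addn0 (a : mexp) : mexp_add a mexp0 = a.
Proof. by apply/ffunP => i; rewrite !ffunE addn0. Qed.

Lemma mexp_add_unit_dec l (a : mexp) :
  (0 < a l)%N -> mexp_add (mexp_unit l) (mexp_dec l a) = a.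
Proof.
move=> a_gt0; apply/ffunP => i; rewrite !ffunE; case: eqP => [->|_] //=.
by rewrite add1n prednK.
Qed.

Lemma mexp_dec_addl l (a b : mexp) :
  (0 < a l)%N -> mexp_dec l (mexp_add a b) = mexp_add (mexp_dec l a) b.
Proof.
move=> a_gt0; apply/ffunP => i; rewrite !ffunE; case: eqP => [->|] //.
by rewrite -subn1 addnC -addnBA ?subn1 1?addnC.
Qed.

Lemma mexp_dec_addr l (a b : mexp) :
  (0 < b l)%N -> mexp_dec l (mexp_add a b) = mexp_add a (mexp_dec l b).
Proof.
move=> b_gt0; apply/ffunP => i; rewrite !ffunE; case: eqP => [->|] //.
by rewrite -subn1 -addnBA ?subn1.
Qed.

Lemma mdeg_add a b : mdeg (mexp_add a b) = (mdeg a + mdeg b)%N.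
Proof. by rewrite /mdeg -big_split; apply: eq_bigr => i _; rewrite ffunE. Qed.

Lemma mdeg_unit l : mdeg (mexp_unit l) = 1%N.
Proof.
rewrite /mdeg (bigD1 l) //= big1 ?ffunE ?eqxx // => i /negbTE il.
by rewrite ffunE il.
Qed.

Lemma mdeg0 : mdeg mexp0 = 0%N.
Proof. by rewrite /mdeg big1 // => i _; rewrite ffunE. Qed.

Lemma mdeg_even (a : mexp) : [forall i, ~~ odd (a i)] -> ~~ odd (mdeg a).
Proof.
move=> /forallP a_even; rewrite /mdeg.
by elim/big_ind: _ => // x y /negbTE ex /negbTE ey; rewrite oddD ex ey.
Qed.

Lemma mono_eval_add a b (x : 'rV[R]_d) :
  mono_eval (mexp_add a b) x = mono_eval a x * mono_eval b x.
Proof. by rewrite /mono_eval -big_split; apply: eq_bigr => i _; rewrite ffunE exprD. Qed.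

Lemma mono_eval_unit l (x : 'rV[R]_d) : mono_eval (mexp_unit l) x = x ord0 l.
Proof.
rewrite /mono_eval (bigD1 l) //= big1 ?ffunE ?eqxx ?mulr1 ?expr1 // => i /negbTE il.
by rewrite ffunE il expr0.
Qed.

Lemma mono_eval0 (x : 'rV[R]_d) : mono_eval mexp0 x = 1.
Proof. by rewrite /mono_eval big1 // => i _; rewrite ffunE expr0. Qed.

Lemma mono_evalN (a : mexp) (z : 'rV[R]_d) :
  mono_eval a (- z) = (-1) ^+ mdeg a * mono_eval a z.
Proof.
rewrite /mono_eval /mdeg -prodrXr -big_split /=; apply: eq_bigr => i _.
by rewrite mxE (exprNn (z ord0 i)).
Qed.

Lemma sqnormN (z : 'rV[R]_d) : sqnorm (- z) = sqnorm z.
Proof. by apply: eq_bigr => i _; rewrite mxE sqrrN. Qed.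

Lemma eq_mlin f g p : (forall m, m \in p -> f m.2 = g m.2) -> mlin f p = mlin g p.
Proof. by move=> fg; apply: eq_big_seq => m /fg ->. Qed.

Lemma eq_mlin_homog f g k p :
  homog k p -> (forall a, mdeg a = k -> f a = g a) -> mlin f p = mlin g p.
Proof. by move=> /allP p_homog fg; apply: eq_mlin => m /p_homog /eqP; apply: fg. Qed.

Lemma mlinD f g p : mlin (fun a => f a + g a) p = mlin f p + mlin g p.
Proof. by rewrite /mlin -big_split; apply: eq_bigr => m _; rewrite mulrDr. Qed.

Lemma mlinZ c f p : mlin (fun a => c * f a) p = c * mlin f p.
Proof. by rewrite /mlin big_distrr; apply: eq_bigr => m _; rewrite mulrCA. Qed.

Lemma mlin_sum (I : finType) (F : I -> mexp -> R) p :
  mlin (fun a => \sum_i F i a) p = \sum_i mlin (F i) p.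
Proof. by rewrite /mlin exchange_big; apply: eq_bigr => m _; rewrite big_distrr. Qed.

Lemma mlin_cat f p q : mlin f (p ++ q) = mlin f p + mlin f q.
Proof. by rewrite /mlin big_cat. Qed.

Lemma mlin_one f : mlin f pone = f mexp0.
Proof. by rewrite /mlin big_cons big_nil mul1r addr0. Qed.

Lemma mlin_mono f a : mlin f (pmono a) = f a.
Proof. by rewrite /mlin big_cons big_nil mul1r addr0. Qed.

Lemma mlin_mul f p q :
  mlin f (pmul p q) = mlin (fun a => mlin (fun b => f (mexp_add a b)) q) p.
Proof.
rewrite /mlin /pmul big_allpairs_dep; apply: eq_bigr => m _.
by rewrite big_distrr; apply: eq_bigr => m' _ /=; rewrite mulrA.
Qed.

Lemma mlin_scale f c p : mlin f (pscale c p) = c * mlin f p.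
Proof. by rewrite /mlin big_map big_distrr; apply: eq_bigr => m _ /=; rewrite mulrA. Qed.

Lemma mlin_deriv f l p :
  mlin f (pderiv l p) = mlin (fun a => (a l)%:R * f (mexp_dec l a)) p.
Proof. by rewrite /mlin big_map; apply: eq_bigr => m _ /=; rewrite mulrA. Qed.

Lemma mlin_lin f x : mlin f (plin x) = \sum_i x ord0 i * f (mexp_unit i).
Proof. by rewrite /mlin big_map. Qed.

Lemma mlin_sqnorm f : mlin f psqnorm = \sum_i f (mexp_add (mexp_unit i) (mexp_unit i)).
Proof. by rewrite /mlin big_map; apply: eq_bigr => i _; rewrite mul1r. Qed.

Lemma mlin_ppowS f x k :
  mlin f (ppow x k.+1) = \sum_i x ord0 i * mlin (fun b => f (mexp_add (mexp_unit i) b)) (ppow x k).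
Proof. by rewrite [ppow _ _]iterS mlin_mul mlin_lin. Qed.

Lemma mlin_deriv_mul f l p q :
  mlin f (pderiv l (pmul p q)) = mlin f (pmul (pderiv l p) q) + mlin f (pmul p (pderiv l q)).
Proof.
rewrite mlin_deriv !mlin_mul mlin_deriv -mlinD; apply: eq_mlin => m _.
rewrite mlin_deriv -mlinZ -mlinD; apply: eq_mlin => m' _.
rewrite ffunE natrD mulrDl; congr (_ + _).
  case ml: (m.2 l) => [|k]; first by rewrite !mul0r.
  by rewrite mexp_dec_addl ?ml.
case ml': (m'.2 l) => [|k]; first by rewrite !mul0r.
by rewrite mexp_dec_addr ?ml'.
Qed.

Lemma mlin_deriv_ppow x l k f :
  mlin f (pderiv l (ppow x k)) = k%:R * x ord0 l * mlin f (ppow x k.-1).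
Proof.
elim: k f => [|k IHk] f; first by rewrite mlin_deriv mlin_one ffunE !mul0r.
rewrite [ppow _ _]iterS mlin_deriv_mul.
have -> : mlin f (pmul (pderiv l (plin x)) (ppow x k)) = x ord0 l * mlin f (ppow x k).
  rewrite mlin_mul mlin_deriv mlin_lin (bigD1 l) //= big1 ?addr0.
    rewrite ffunE eqxx mul1r; congr (_ * _); apply: eq_mlin => m _.
    by congr f; apply/ffunP => i; rewrite !ffunE; case: eqP.
  by move=> i /negbTE il; rewrite ffunE eq_sym il mul0r mulr0.
rewrite mlin_mul mlin_lin; under eq_bigr do rewrite IHk.
case: k IHk => [|k] IHk; first by rewrite big1 ?addr0 ?mul1r // => i _; rewrite !mul0r mulr0.
rewrite mlin_ppowS !big_distrr -big_split /=; apply: eq_bigr => i _.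
by rewrite -[k.+2]addn1 natrD; ring.
Qed.

Lemma peval_mlin (p : mpoly) x : peval p x = mlin (fun a => mono_eval a x) p.
Proof. by []. Qed.

Lemma peval_cat (p q : mpoly) y : peval (p ++ q) y = peval p y + peval q y.
Proof. by rewrite !peval_mlin mlin_cat. Qed.

Lemma peval_one (x : 'rV[R]_d) : peval pone x = 1.
Proof. by rewrite peval_mlin mlin_one mono_eval0. Qed.

Lemma peval_mul (p q : mpoly) x : peval (pmul p q) x = peval p x * peval q x.
Proof.
rewrite !peval_mlin mlin_mul /mlin big_distrl; apply: eq_bigr => m _ /=.
rewrite -mulrA; congr (_ * _); rewrite big_distrr; apply: eq_bigr => m' _ /=.
by rewrite mono_eval_add mulrCA.
Qed.

Lemma peval_scale c (p : mpoly) y : peval (pscale c p) y = c * peval p y.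
Proof. by rewrite !peval_mlin mlin_scale. Qed.

Lemma peval_lin x y : peval (plin x) y = \sum_i x ord0 i * y ord0 i.
Proof. by rewrite peval_mlin mlin_lin; apply: eq_bigr => i _; rewrite mono_eval_unit. Qed.

Lemma peval_lin_self x : peval (plin x) x = sqnorm x.
Proof. by rewrite peval_lin; apply: eq_bigr => i _; rewrite expr2. Qed.

Lemma peval_sqnorm (y : 'rV[R]_d) : peval psqnorm y = sqnorm y.
Proof.
rewrite peval_mlin mlin_sqnorm; apply: eq_bigr => i _.
by rewrite mono_eval_add mono_eval_unit expr2.
Qed.

Lemma peval_ppow x k y : peval (ppow x k) y = peval (plin x) y ^+ k.
Proof.
elim: k => [|k IHk]; first by rewrite peval_one.
by rewrite [ppow _ _]iterS peval_mul IHk exprS.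
Qed.

Lemma peval_sqnorm_mul m p y : peval (psqnorm_mul m p) y = sqnorm y ^+ m * peval p y.
Proof.
elim: m => [|m IHm]; first by rewrite mul1r.
by rewrite [psqnorm_mul _ _]iterS peval_mul IHm peval_sqnorm exprS mulrA.
Qed.

Lemma peval_zonal x m i y :
  peval (pzonal x m i) y = sqnorm y ^+ m * peval (plin x) y ^+ i.
Proof. by rewrite peval_sqnorm_mul peval_ppow. Qed.

Lemma peval_mono a y : peval (pmono a) y = mono_eval a y.
Proof. by rewrite peval_mlin mlin_mono. Qed.

Lemma homog_mul k k' p q : homog k p -> homog k' q -> homog (k + k') (pmul p q).
Proof.
move=> /allP hp /allP hq; apply/allP => m /allpairsPdep [m1 [m2 [m1p m2q ->]]] /=.
by rewrite mdeg_add (eqP (hp _ m1p)) (eqP (hq _ m2q)).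
Qed.

Lemma homog_one : homog 0 pone.
Proof. by rewrite /homog /= mdeg0. Qed.

Lemma homog_lin x : homog 1 (plin x).
Proof. by apply/allP => m /mapP [i _ ->]; rewrite /= mdeg_unit. Qed.

Lemma homog_sqnorm : homog 2 psqnorm.
Proof. by apply/allP => m /mapP [i _ ->]; rewrite /= mdeg_add mdeg_unit. Qed.

Lemma homog_ppow x k : homog k (ppow x k).
Proof.
elim: k => [|k IHk]; first exact: homog_one.
by rewrite [ppow _ _]iterS; apply: homog_mul (homog_lin x) IHk.
Qed.

Lemma homog_sqnorm_mul k m p : homog k p -> homog (2 * m + k) (psqnorm_mul m p).
Proof.
move=> p_homog; elim: m => [|m IHm] //.
by rewrite [psqnorm_mul _ _]iterS mulnS -addnA; apply: homog_mul homog_sqnorm IHm.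
Qed.

Lemma homog_zonal x m i : homog (2 * m + i) (pzonal x m i).
Proof. exact/homog_sqnorm_mul/homog_ppow. Qed.

Lemma homog_mono a : homog (mdeg a) (pmono a).
Proof. by rewrite /homog /= eqxx. Qed.

Lemma homog_scale k c p : homog k p -> homog k (pscale c p).
Proof. by move=> /allP hp; apply/allP => m /mapP [m' /hp ? ->]. Qed.

Lemma homog_pdeg_le k t p : homog k p -> (k <= t)%N -> pdeg_le p t.
Proof. by move=> /allP hp kt; apply/allP => m /hp /eqP ->. Qed.

End Polynomials.

Section SphereAverage.
Variable R : rcfType.
Variable d : nat.
Local Notation mexp := (mexp d).
Local Notation avg := (@sphere_mono_avg R d).

Lemma dfactS n : dfact n.+1 = (n.+1 * dfact n.-1)%N.
Proof. by case: n => [|n] //=; rewrite muln1. Qed.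

Lemma sphere_den_neq0 k : (0 < d)%N -> \prod_(j < k) ((d + 2 * j)%:R : R) != 0.
Proof.
move=> d_gt0; rewrite -natr_prod pnatr_eq0 -lt0n prodn_gt0 // => j.
by rewrite addn_gt0 d_gt0.
Qed.

Lemma sphere_mono_avg_odd (a : mexp) : odd (mdeg a) -> avg a = 0.
Proof. by rewrite /sphere_mono_avg; case: ifP => // /mdeg_even /negbTE ->. Qed.

Lemma sphere_mono_avg_unit_add0 l (a : mexp) : a l = 0%N -> avg (mexp_add (mexp_unit l) a) = 0.
Proof.
move=> al0; rewrite /sphere_mono_avg; case: ifP => // /forallP /(_ l).
by rewrite !ffunE eqxx al0.
Qed.

Lemma sphere_mono_avg0 : avg (mexp0 d) = 1.
Proof.
rewrite /sphere_mono_avg; case: ifP => [_|/forallP []]; last by move=> i; rewrite ffunE.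
by rewrite mdeg0 big_ord0 big1 ?divr1 // => i _; rewrite ffunE.
Qed.

Lemma sphere_mono_avg_unit l : avg (mexp_unit l) = 0.
Proof. by rewrite -[mexp_unit l]mexp_addn0 sphere_mono_avg_unit_add0 // ffunE. Qed.

Hypothesis d_gt0 : (0 < d)%N.

Lemma sphere_mono_avg_add_sq l (c : mexp) :
  avg (mexp_add (mexp_add (mexp_unit l) (mexp_unit l)) c)
  = (c l).+1%:R / (d + mdeg c)%:R * avg c.
Proof.
rewrite /sphere_mono_avg; set b := mexp_add _ _.
have bE i : b i = ((i == l).*2 + c i)%N by rewrite !ffunE addnn.
have -> : [forall i, ~~ odd (b i)] = [forall i, ~~ odd (c i)].
  by apply: eq_forallb => i; rewrite bE oddD odd_double.
case: ifP => c_even; last by rewrite mulr0.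
have -> : mdeg b = (mdeg c).+2 by rewrite !mdeg_add mdeg_unit.
have half_c : (2 * (mdeg c)./2)%N = mdeg c.
  by rewrite mul2n -{2}(odd_double_half (mdeg c)) (negbTE (mdeg_even c_even)).
rewrite /= big_ord_recr /= half_c (bigD1 l) //= [X in _ = _ * (X%:R / _)](bigD1 l) //=.
have -> : (b l).-1 = (c l).+1 by rewrite bE eqxx.
have -> : \prod_(i < d | i != l) dfact (b i).-1 = \prod_(i < d | i != l) dfact (c i).-1.
  by apply: eq_bigr => i /negbTE il; rewrite bE il.
have dc_neq0 : ((d + mdeg c)%:R : R) != 0 by rewrite pnatr_eq0 -lt0n addn_gt0 d_gt0.
rewrite dfactS !natrM; field.
by rewrite sphere_den_neq0 // -natrD dc_neq0.
Qed.

(* Integration by parts on the sphere. *)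
Lemma sphere_mono_avg_unit_add l (a : mexp) :
  avg (mexp_add (mexp_unit l) a) = (a l)%:R * avg (mexp_dec l a) / (d + (mdeg a).-1)%:R.
Proof.
case al: (a l) => [|k]; first by rewrite sphere_mono_avg_unit_add0 // !mul0r.
have al_gt0 : (0 < a l)%N by rewrite al.
rewrite -{1}(mexp_add_unit_dec al_gt0) -mexp_addA sphere_mono_avg_add_sq.
have -> : mexp_dec l a l = k by rewrite ffunE eqxx al.
have -> : mdeg (mexp_dec l a) = (mdeg a).-1.
  by rewrite -{2}(mexp_add_unit_dec al_gt0) mdeg_add mdeg_unit.
by rewrite mulrAC.
Qed.

Lemma sum_sphere_mono_avg_sq (c : mexp) :
  \sum_l avg (mexp_add (mexp_add (mexp_unit l) (mexp_unit l)) c) = avg c.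
Proof.
under eq_bigr do rewrite sphere_mono_avg_add_sq.
rewrite -!big_distrl -natr_sum /=.
have -> : (\sum_(i < d) (c i).+1 = d + mdeg c)%N.
  rewrite (eq_bigr (fun i => c i + 1)%N) => [|i _]; last by rewrite addn1.
  by rewrite big_split /= sum_nat_const card_ord muln1 addnC.
have dc_neq0 : ((d + mdeg c)%:R : R) != 0 by rewrite pnatr_eq0 -lt0n addn_gt0 d_gt0.
by rewrite divff // mul1r.
Qed.

Lemma mlin_avg_pmul_sqnorm p : mlin avg (pmul (psqnorm R d) p) = mlin avg p.
Proof.
rewrite mlin_mul mlin_sqnorm -mlin_sum; apply: eq_mlin => m _.
exact: sum_sphere_mono_avg_sq.
Qed.

Lemma mlin_avg_psqnorm_mul m p : mlin avg (psqnorm_mul m p) = mlin avg p.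
Proof. by elim: m => [|m IHm] //; rewrite [psqnorm_mul _ _]iterS mlin_avg_pmul_sqnorm. Qed.

End SphereAverage.

Section ZonalMoments.
Variable R : rcfType.
Variable d : nat.
Local Notation avg := (@sphere_mono_avg R d).

Lemma sphere_avg_r_cat r (p q : mpoly R d) :
  sphere_avg_r r (p ++ q) = sphere_avg_r r p + sphere_avg_r r q.
Proof. by rewrite /sphere_avg_r big_cat. Qed.

Lemma sphere_avg_r_homog r k p :
  homog k p -> sphere_avg_r r p = r ^+ k * mlin avg p.
Proof.
move=> p_homog; rewrite -mlinZ -(eq_mlin_homog p_homog (f := fun a => r ^+ mdeg a * avg a)).
  by apply: eq_bigr => m _; rewrite mulrA.
by move=> a ->.
Qed.

Definition zmoment (x : 'rV[R]_d) (k : nat) : R := mlin avg (ppow x k).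

Lemma zmoment0 x : zmoment x 0 = 1.
Proof. by rewrite /zmoment mlin_one sphere_mono_avg0. Qed.

Lemma zmoment1 x : zmoment x 1 = 0.
Proof.
rewrite /zmoment mlin_ppowS big1 // => i _.
by rewrite mlin_one mexp_addn0 sphere_mono_avg_unit mulr0.
Qed.

Lemma zmomentSS x k : (0 < d)%N ->
  zmoment x k.+2 = k.+1%:R * sqnorm x / (d + k)%:R * zmoment x k.
Proof.
move=> d_gt0; rewrite /zmoment mlin_ppowS.
have avg_shift i : mlin (fun b => avg (mexp_add (mexp_unit i) b)) (ppow x k.+1)
    = (d + k)%:R^-1 * (k.+1%:R * x ord0 i * mlin avg (ppow x k)).
  rewrite -mlin_deriv_ppow mlin_deriv -mlinZ.
  apply: (eq_mlin_homog (homog_ppow x k.+1)) => a deg_a.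
  by rewrite sphere_mono_avg_unit_add // deg_a mulrC.
under eq_bigr do rewrite avg_shift.
transitivity (\sum_i x ord0 i ^+ 2 * ((d + k)%:R^-1 * (k.+1%:R * mlin avg (ppow x k)))).
  by apply: eq_bigr => i _; ring.
by rewrite -big_distrl /= /sqnorm; ring.
Qed.

End ZonalMoments.

Lemma spherical_design_monomials (R : rcfType) d t (Z : seq 'rV[R]_d) :
  Z != [::] -> uniq Z -> all (on_sphere 1) Z ->
  (forall a : mexp d, (mdeg a <= t)%N ->
     \sum_(z <- Z) mono_eval a z = (size Z)%:R * sphere_mono_avg R a) ->
  spherical_design t Z.
Proof.
move=> Z_neq0 Z_uniq Z_sph Z_mono; split => // p p_deg.
have Z_size : (size Z)%:R != 0 :> R by rewrite pnatr_eq0 size_eq0.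
rewrite /sphere_avg_r /peval exchange_big big_distrl /=; apply: eq_big_seq => m mp.
by rewrite -big_distrr /= Z_mono ?(allP p_deg) // expr1n mulr1 mulrA mulrAC mulfK.
Qed.

Section ZonalCombinations.
Variable R : rcfType.
Variable d : nat.

(* [t = (c, m, i)] stands for [c * |y|^(2m) * <x, y>^i]. *)
Definition pzonal_comb (x : 'rV[R]_d) (L : seq (R * nat * nat)) : mpoly R d :=
  flatten [seq pscale t.1.1 (pzonal x t.1.2 t.2) | t <- L].

Definition zonal_comb_sq (L : seq (R * nat * nat)) : seq (R * nat * nat) :=
  [seq (t.1.1 * t'.1.1, (t.1.2 + t'.1.2)%N, (t.2 + t'.2)%N) | t <- L, t' <- L].

Lemma peval_zonal_comb x L y :
  peval (pzonal_comb x L) y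
  = \sum_(t <- L) t.1.1 * (sqnorm y ^+ t.1.2 * peval (plin x) y ^+ t.2).
Proof.
elim: L => [|t L IHL]; first by rewrite big_nil /peval big_nil.
by rewrite /pzonal_comb /= peval_cat -/(pzonal_comb x L) IHL big_cons peval_scale peval_zonal.
Qed.

Lemma peval_zonal_comb_sq x L y :
  peval (pzonal_comb x (zonal_comb_sq L)) y = peval (pzonal_comb x L) y ^+ 2.
Proof.
rewrite !peval_zonal_comb big_allpairs_dep expr2 big_distrl; apply: eq_bigr => t _.
rewrite big_distrr; apply: eq_bigr => t' _ /=.
by rewrite !exprD; ring.
Qed.

Lemma sphere_avg_zonal_comb r x L : (0 < d)%N ->
  sphere_avg_r r (pzonal_comb x L)
  = \sum_(t <- L) t.1.1 * (r ^+ (2 * t.1.2 + t.2) * zmoment x t.2).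
Proof.
move=> d_gt0; elim: L => [|t L IHL]; first by rewrite big_nil /sphere_avg_r big_nil.
rewrite /pzonal_comb /= sphere_avg_r_cat -/(pzonal_comb x L) IHL big_cons.
rewrite (sphere_avg_r_homog _ (homog_scale _ (homog_zonal x _ _))).
by rewrite mlin_scale mlin_avg_psqnorm_mul // mulrCA.
Qed.

Lemma sphere_avg_zonal_comb_sq r x L : (0 < d)%N ->
  sphere_avg_r r (pzonal_comb x (zonal_comb_sq L))
  = \sum_(t <- L) \sum_(t' <- L) t.1.1 * t'.1.1
      * (r ^+ (2 * (t.1.2 + t'.1.2) + (t.2 + t'.2)) * zmoment x (t.2 + t'.2)).
Proof. by move=> d_gt0; rewrite sphere_avg_zonal_comb // big_allpairs_dep. Qed.

Lemma pdeg_le_zonal_comb x L k :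
  all (fun t => 2 * t.1.2 + t.2 <= k)%N L -> pdeg_le (pzonal_comb x L) k.
Proof.
elim: L => [|t L IHL] //= /andP [t_le L_le].
rewrite /pdeg_le all_cat; apply/andP; split; last exact: IHL.
exact: homog_pdeg_le (homog_scale _ (homog_zonal x _ _)) t_le.
Qed.

End ZonalCombinations.

Section SumBounds.
Variables (R : realDomainType) (T : eqType).
Implicit Types (X : seq T) (F : T -> R).

Lemma sum_le_const X F c :
  (forall x, x \in X -> F x <= c) -> \sum_(x <- X) F x <= c * (size X)%:R.
Proof.
elim: X => [|a X IHX] F_le; first by rewrite big_nil mulr0.
rewrite big_cons /= -[(size X).+1]addn1 natrD mulrDr mulr1 addrC lerD //.
  by apply: IHX => x xX; apply: F_le; rewrite inE xX orbT.
by apply: F_le; rewrite inE eqxx.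
Qed.

Lemma sum_eq_const X F c :
  (forall x, x \in X -> F x <= c) -> \sum_(x <- X) F x = c * (size X)%:R ->
  forall x, x \in X -> F x = c.
Proof.
elim: X => [|a X IHX] F_le //.
rewrite big_cons /= -[(size X).+1]addn1 natrD mulrDr mulr1 => sumE.
have F_leX x : x \in X -> F x <= c by move=> xX; apply: F_le; rewrite inE xX orbT.
have Fa_le : F a <= c by apply: F_le; rewrite inE eqxx.
have := sum_le_const F_leX => sumX_le.
have Fa : F a = c by lra.
move=> x; rewrite inE => /orP [/eqP ->|xX] //.
by apply: IHX => //; lra.
Qed.

Lemma sum_gt0_seq X F :
  X != [::] -> (forall x, x \in X -> 0 < F x) -> 0 < \sum_(x <- X) F x.
Proof.
case: X => [|a X] // _ F_gt0; rewrite big_cons ltr_wpDr //; last by apply: F_gt0; rewrite inE eqxx.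
rewrite big_seq_cond sumr_ge0 // => x /andP [xX _]; apply/ltW/F_gt0.
by rewrite inE xX orbT.
Qed.

Lemma sum_ge_term X F x0 :
  uniq X -> x0 \in X -> (forall x, x \in X -> 0 <= F x) -> F x0 <= \sum_(x <- X) F x.
Proof.
move=> X_uniq x0X F_ge0; rewrite (bigD1_seq x0) //= lerDl big_seq_cond sumr_ge0 //.
by move=> x /andP [xX _]; apply: F_ge0.
Qed.

End SumBounds.

Section WeightBound.
Variables (R : rcfType) (d : nat).

Lemma design_weight_bound (I : mpoly R d -> R) (X : seq 'rV[R]_d) w t x0 p q :
  (forall p, pdeg_le p t -> I p = \sum_(x <- X) w x * peval p x) ->
  uniq X -> (forall x, x \in X -> 0 < w x) -> x0 \in X ->
  pdeg_le p t -> (forall y, peval p y = peval q y ^+ 2) ->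
  w x0 * peval q x0 ^+ 2 <= I p.
Proof.
move=> design X_uniq w_gt0 x0X p_deg pE; rewrite design // -pE.
apply: (sum_ge_term (F := fun x => w x * peval p x)) => // x xX.
by rewrite pE mulr_ge0 ?sqr_ge0 // ltW // w_gt0.
Qed.

End WeightBound.

Section Weights22.
Variable R : rcfType.

Lemma zmoment22E (x : 'rV[R]_22) :
  (zmoment x 0 = 1) * (zmoment x 1 = 0) * (zmoment x 2 = sqnorm x / 22) *
  (zmoment x 3 = 0) * (zmoment x 4 = 3 * sqnorm x ^+ 2 / 528) * (zmoment x 5 = 0) *
  (zmoment x 6 = 15 * sqnorm x ^+ 3 / 13728).
Proof.
have zm0 := zmoment0 x; have zm1 := zmoment1 x.
have zm2 : zmoment x 2 = sqnorm x / 22 by rewrite zmomentSS // zm0; field.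
have zm3 : zmoment x 3 = 0 by rewrite zmomentSS // zm1 mulr0.
have zm4 : zmoment x 4 = 3 * sqnorm x ^+ 2 / 528 by rewrite zmomentSS // zm2; field.
have zm5 : zmoment x 5 = 0 by rewrite zmomentSS // zm3 mulr0.
have zm6 : zmoment x 6 = 15 * sqnorm x ^+ 3 / 13728 by rewrite zmomentSS // zm4; field.
by [].
Qed.

(* Annihilator polynomials at a point x of the inner, resp. outer, layer, as
   polynomials in |y|^2 and <x, y>; e.g. q_inner vanishes at unit vectors y
   with <x, y> in {1/6, -1/4, -2/3}. *)
Definition q_inner : seq (R * nat * nat) :=
  [:: (1, 0%N, 0%N); (-5, 1%N, 0%N); (22, 0%N, 1%N); (-20, 1%N, 1%N);
      (108, 0%N, 2%N); (144, 0%N, 3%N)].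
Definition q_outer : seq (R * nat * nat) :=
  [:: (-1, 0%N, 0%N); (-5, 1%N, 0%N); (-2, 0%N, 1%N); (-20, 1%N, 1%N);
      (12, 0%N, 2%N); (16, 0%N, 3%N)].

Lemma q_inner_center (x : 'rV[R]_22) : sqnorm x = 1 -> peval (pzonal_comb x q_inner) x = 250.
Proof. by move=> nx; rewrite peval_zonal_comb peval_lin_self nx !big_cons big_nil /=; ring. Qed.

Lemma q_outer_center (x : 'rV[R]_22) : sqnorm x = 11 -> peval (pzonal_comb x q_outer) x = 20250.
Proof. by move=> nx; rewrite peval_zonal_comb peval_lin_self nx !big_cons big_nil /=; ring. Qed.

Lemma sphere_avg_q_inner_sq (x : 'rV[R]_22) r : sqnorm x = 1 -> r ^+ 2 = 11 ->
  sphere_avg_r 1 (pzonal_comb x (zonal_comb_sq q_inner)) = 9883 / 143 /\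
  sphere_avg_r r (pzonal_comb x (zonal_comb_sq q_inner)) = 81 * 7 * 359 / 13.
Proof.
move=> nx r2.
have r4 : r ^+ 4 = 121 by rewrite (exprM r 2 2) r2; ring.
have r6 : r ^+ 6 = 1331 by rewrite (exprM r 2 3) r2; ring.
rewrite !sphere_avg_zonal_comb_sq // /q_inner unlock -!plusE -!multE /=.
by rewrite !zmoment22E nx !expr1n ?r2 ?r4 ?r6; split; field.
Qed.

Lemma sphere_avg_q_outer_sq (x : 'rV[R]_22) r : sqnorm x = 11 -> r ^+ 2 = 11 ->
  sphere_avg_r 1 (pzonal_comb x (zonal_comb_sq q_outer)) = 2513 / 13 /\
  sphere_avg_r r (pzonal_comb x (zonal_comb_sq q_outer)) = 9 * 29 * 9133 / 13.
Proof.
move=> nx r2.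
have r4 : r ^+ 4 = 121 by rewrite (exprM r 2 2) r2; ring.
have r6 : r ^+ 6 = 1331 by rewrite (exprM r 2 3) r2; ring.
rewrite !sphere_avg_zonal_comb_sq // /q_outer unlock -!plusE -!multE /=.
by rewrite !zmoment22E nx !expr1n ?r2 ?r4 ?r6; split; field.
Qed.

Lemma euclidean_design_two_shells (X1 X2 : seq 'rV[R]_22) w :
  euclidean_design 6 [:: (1, X1); (Num.sqrt 11, X2)] w ->
  [/\ uniq (X1 ++ X2), all (on_sphere 1) X1 && all (on_sphere (Num.sqrt 11)) X2,
      (forall x, x \in X1 ++ X2 -> 0 < w x) &
      forall p, pdeg_le p 6 ->
        (\sum_(x <- X1) w x) * sphere_avg_r 1 p
        + (\sum_(x <- X2) w x) * sphere_avg_r (Num.sqrt 11) p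
        = \sum_(x <- X1 ++ X2) w x * peval p x].
Proof.
case=> /= X_uniq _ /andP [X1_sph /andP [X2_sph _]] w_gt0 design.
rewrite cats0 in X_uniq w_gt0 design; split => //; first by rewrite X1_sph X2_sph.
by move=> p /design; rewrite !big_cons big_nil addr0.
Qed.

Lemma design_weights (X1 X2 : seq 'rV[R]_22) w :
  euclidean_design 6 [:: (1, X1); (Num.sqrt 11, X2)] w ->
  size X1 = 275%N -> size X2 = 2025%N ->
  [/\ \sum_(x <- X1) w x = 99 * \sum_(x <- X2) w x, 0 < \sum_(x <- X2) w x,
      (forall x, x \in X1 -> w x = (\sum_(x <- X1) w x) / 275) &
      (forall x, x \in X2 -> w x = (\sum_(x <- X2) w x) / 2025)].
Proof.
move=> /euclidean_design_two_shells [X_uniq /andP [X1_sph X2_sph] w_gt0 design] X1_size X2_size.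
set W1 := \sum_(x <- X1) w x; set W2 := \sum_(x <- X2) w x.
have r2 : Num.sqrt 11 ^+ 2 = 11 :> R by rewrite sqr_sqrtr.
have W2_gt0 : 0 < W2.
  apply: sum_gt0_seq; first by rewrite -size_eq0 X2_size.
  by move=> x xX2; apply: w_gt0; rewrite mem_cat xX2 orbT.
pose c1 := (W1 * (9883 / 143) + W2 * (81 * 7 * 359 / 13)) / (250 * 250).
pose c2 := (W1 * (2513 / 13) + W2 * (9 * 29 * 9133 / 13)) / (20250 * 20250).
have w_le1 x : x \in X1 -> w x <= c1.
  move=> xX1; have nx : sqnorm x = 1 by move: (allP X1_sph x xX1) => /eqP ->; rewrite expr1n.
  have [avg1 avg2] := sphere_avg_q_inner_sq nx r2.
  have := design_weight_bound (x0 := x) design X_uniq w_gt0 _ _ (peval_zonal_comb_sq x q_inner).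
  rewrite q_inner_center // avg1 avg2 mem_cat xX1 pdeg_le_zonal_comb // => /(_ isT isT).
  by move=> bound; rewrite /c1 ler_pdivlMr ?mulr_gt0 // -expr2.
have w_le2 x : x \in X2 -> w x <= c2.
  move=> xX2; have nx : sqnorm x = 11 by move: (allP X2_sph x xX2) => /eqP ->.
  have [avg1 avg2] := sphere_avg_q_outer_sq nx r2.
  have := design_weight_bound (x0 := x) design X_uniq w_gt0 _ _ (peval_zonal_comb_sq x q_outer).
  rewrite q_outer_center // avg1 avg2 mem_cat xX2 orbT pdeg_le_zonal_comb // => /(_ isT isT).
  by move=> bound; rewrite /c2 ler_pdivlMr ?mulr_gt0 // -expr2.
have := @sum_le_const _ _ X1 w c1 w_le1; have := @sum_le_const _ _ X2 w c2 w_le2.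
rewrite X1_size X2_size -/W1 -/W2 => W2_le W1_le.
have W1E : W1 = 99 * W2.
  by move: W1_le W2_le; rewrite /c1 /c2; clear -W2_gt0; lra.
have c1E : c1 = W1 / 275 by rewrite /c1 W1E; field.
have c2E : c2 = W2 / 2025 by rewrite /c2 W1E; field.
have W1_sum : W1 = c1 * (size X1)%:R by rewrite X1_size c1E; field.
have W2_sum : W2 = c2 * (size X2)%:R by rewrite X2_size c2E; field.
split => // x xX; first by rewrite (sum_eq_const w_le1 W1_sum xX).
by rewrite (sum_eq_const w_le2 W2_sum xX).
Qed.

End Weights22.

Section LayerMoments.
Variable R : rcfType.

Lemma layer_moment_identity (X1 X2 : seq 'rV[R]_22) w (a : mexp 22) m :
  euclidean_design 6 [:: (1, X1); (Num.sqrt 11, X2)] w ->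
  size X1 = 275%N -> size X2 = 2025%N -> (2 * m + mdeg a <= 6)%N ->
  99 / 275 * \sum_(x <- X1) mono_eval a x + 11 ^+ m / 2025 * \sum_(x <- X2) mono_eval a x
  = (99 + 11 ^+ (m + (mdeg a)./2)) * sphere_mono_avg R a.
Proof.
move=> des X1_size X2_size deg_a.
have [W1E W2_gt0 w1 w2] := design_weights des X1_size X2_size.
have [_ /andP [X1_sph X2_sph] _ design] := euclidean_design_two_shells des.
have r2 : Num.sqrt 11 ^+ 2 = 11 :> R by rewrite sqr_sqrtr.
set W2 := \sum_(x <- X2) w x; set p := psqnorm_mul m (pmono R a); set A := sphere_mono_avg R a.
have p_homog : homog (2 * m + mdeg a) p := homog_sqnorm_mul m (homog_mono R a).
have layer_sum X c s : (forall x, x \in X -> w x = c) -> (forall x, x \in X -> sqnorm x = s) ->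
    \sum_(x <- X) w x * peval p x = c * s ^+ m * \sum_(x <- X) mono_eval a x.
  move=> wc ns; rewrite big_distrr; apply: eq_big_seq => x xX /=.
  by rewrite peval_sqnorm_mul peval_mono (wc x xX) (ns x xX) mulrA.
have rA : Num.sqrt 11 ^+ (2 * m + mdeg a) * A = 11 ^+ (m + (mdeg a)./2) * A.
  have [a_odd|a_even] := boolP (odd (mdeg a)); first by rewrite /A sphere_mono_avg_odd // !mulr0.
  by rewrite exprD exprM r2 (expr_even r2 a_even) -exprD.
have := design p (homog_pdeg_le p_homog deg_a).
rewrite !(sphere_avg_r_homog _ p_homog) /p mlin_avg_psqnorm_mul // mlin_mono -/A expr1n mul1r rA.
rewrite big_cat /= (layer_sum _ _ 1 w1) => [|x /(allP X1_sph) /eqP ->]; last by rewrite expr1n.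
rewrite (layer_sum _ _ 11 w2) => [|x /(allP X2_sph) /eqP ->] //.
set S1 := \sum_(x <- X1) mono_eval a x; set S2 := \sum_(x <- X2) mono_eval a x.
rewrite W1E -/W2 expr1n => E; apply: (mulfI (lt0r_neq0 W2_gt0)); rewrite -/W2.
(* [ring] must not see these bodies: it would try to evaluate [mdeg a]. *)
set j := mdeg a in E *; clearbody W2 S1 S2 A j.
transitivity (99 * W2 / 275 * 1 * S1 + W2 / 2025 * 11 ^+ m * S2); first by ring.
by rewrite -E; ring.
Qed.

End LayerMoments.

Section Lift.
Variable R : rcfType.

Definition mexp_init (a : mexp 23) : mexp 22 := [ffun i => a (widen_ord (leqnSn 22) i)].

Lemma mdeg_init_last (a : mexp 23) : mdeg a = (mdeg (mexp_init a) + a ord_max)%N.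
Proof. by rewrite /mdeg big_ord_recr /=; congr (_ + _)%N; apply: eq_bigr => i _; rewrite ffunE. Qed.

Lemma ext23_widen (x : 'rV[R]_22) al be (i : 'I_22) :
  ext23 x al be ord0 (widen_ord (leqnSn 22) i) = al * x ord0 i.
Proof.
rewrite mxE /= ltn_ord; congr (_ * x ord0 _); apply: val_inj.
by rewrite /= inordK // ltnW // ltnS ltn_ord.
Qed.

Lemma ext23_last (x : 'rV[R]_22) al be : ext23 x al be ord0 ord_max = be.
Proof. by rewrite mxE. Qed.

Lemma mono_eval_ext23 (a : mexp 23) (x : 'rV[R]_22) al be :
  mono_eval a (ext23 x al be)
  = al ^+ mdeg (mexp_init a) * be ^+ a ord_max * mono_eval (mexp_init a) x.
Proof.
rewrite /mono_eval big_ord_recr /= ext23_last [RHS]mulrAC; congr (_ * _).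
rewrite /mdeg -prodrXr -big_split /=; apply: eq_bigr => i _.
by rewrite ext23_widen !ffunE exprMn.
Qed.

Lemma sqnorm_ext23 (x : 'rV[R]_22) al be :
  sqnorm (ext23 x al be) = al ^+ 2 * sqnorm x + be ^+ 2.
Proof.
rewrite /sqnorm big_ord_recr /= ext23_last big_distrr; congr (_ + _); apply: eq_bigr => i _.
by rewrite ext23_widen exprMn.
Qed.

Lemma ext23_inj al be : al != 0 -> injective (fun x : 'rV[R]_22 => ext23 x al be).
Proof.
move=> al_neq0 x y /= xy; apply/rowP => i; rewrite (_ : 0 = ord0) //.
by apply: (mulfI al_neq0); rewrite -(ext23_widen x al be) -(ext23_widen y al be) xy.
Qed.

(* The ratio of the average of x^a over S^22 to that of x^(mexp_init a) over
   S^21, for j = mdeg (mexp_init a) and k = a ord_max. *)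
Definition lift_avg_factor (j k : nat) : R :=
  if odd k then 0 else
  (dfact k.-1)%:R * (\prod_(i < j./2) (22 + 2 * i)%:R)
    / \prod_(i < (j + k)./2) (23 + 2 * i)%:R.

Lemma sphere_mono_avg_lift (a : mexp 23) :
  sphere_mono_avg R a
  = sphere_mono_avg R (mexp_init a) * lift_avg_factor (mdeg (mexp_init a)) (a ord_max).
Proof.
rewrite /sphere_mono_avg /lift_avg_factor mdeg_init_last.
have -> : [forall i, ~~ odd (a i)]
    = [forall i, ~~ odd (mexp_init a i)] && ~~ odd (a ord_max).
  apply/forallP/andP => [a_even|[/forallP init_even last_even] i].
    by split => //; apply/forallP => i; rewrite ffunE.
  case: (unliftP ord_max i) => [j ->|->] //.
  have := init_even j; rewrite ffunE; congr (~~ odd (a _)); apply: val_inj => /=.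
  by rewrite /bump leqNgt ltn_ord.
have [init_even|] := boolP [forall i, ~~ odd (mexp_init a i)]; last by rewrite mul0r.
have [|last_even] := boolP (odd (a ord_max)); first by rewrite mulr0.
rewrite /= big_ord_recr /= mulrC natrM.
have D22 := @sphere_den_neq0 R 22 (mdeg (mexp_init a))./2 isT.
have D23 := @sphere_den_neq0 R 23 (mdeg (mexp_init a) + a ord_max)./2 isT.
have -> : \prod_(i < 22) dfact (a (widen_ord (leqnSn 22) i)).-1
    = \prod_(i < 22) dfact (mexp_init a i).-1 by apply: eq_bigr => i _; rewrite ffunE.
by field; rewrite D22 D23.
Qed.

Lemma lift_moment_identity (j k : nat) (S1 S2 A : R) :
  (j + k <= 6)%N -> ~~ odd (j + k) -> (odd j -> A = 0) ->
  (forall m, (2 * m + j <= 6)%N ->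
     99 / 275 * S1 + 11 ^+ m / 2025 * S2 = (99 + 11 ^+ (m + j./2)) * A) ->
  2 * (2 ^+ j / 5 ^+ ((j + k)./2) * S1 + 2 ^+ j / 45 ^+ ((j + k)./2) * S2)
  = 4600 * (A * lift_avg_factor j k).
Proof.
move=> jk_le jk_even j_odd layer.
have j_le : (2 * 0 + j <= 6)%N by rewrite muln0 (leq_trans (leq_addr k j)).
have S1E : S1 = 275 / 99 * ((99 + 11 ^+ j./2) * A - S2 / 2025).
  by rewrite -(layer 0%N j_le); field.
have S2E : (j <= 4)%N -> S2 = 2025 / 10 * (11 ^+ (j./2).+1 - 11 ^+ j./2) * A.
  move=> j_le4; have j_le' : (2 * 1 + j <= 6)%N by rewrite (leq_add (leqnn 2) j_le4).
  have S2E' : 10 * S2 / 2025 = (99 + 11 ^+ (1 + j./2)) * A - (99 + 11 ^+ (0 + j./2)) * A.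
    by rewrite -(layer 1%N j_le') -(layer 0%N j_le); field.
  transitivity (2025 / 10 * (10 * S2 / 2025)); first by field.
  by rewrite S2E' add1n add0n; ring.
rewrite S1E; clear layer S1E j_le; move: jk_le jk_even S2E j_odd.
case: j => [|[|[|[|[|[|[|j]]]]]]]; case: k => [|[|[|[|[|[|[|k]]]]]]] // => _ _ S2E j_odd;
  rewrite /lift_avg_factor /= ?big_ord_recr ?big_ord0 /=;
  try rewrite (S2E isT); try rewrite (j_odd isT); by field.
Qed.

End Lift.

Section AntipodalLift.
Variable R : rcfType.

Definition antipodal_lift (X1 X2 : seq 'rV[R]_22) (a1 b1 a2 b2 : R) : seq 'rV[R]_23 :=
  [seq ext23 x a1 b1 | x <- X1] ++ [seq ext23 x a2 b2 | x <- X2]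
  ++ [seq - ext23 x a1 b1 | x <- X1] ++ [seq - ext23 x a2 b2 | x <- X2].

Lemma sum_mono_eval_antipodal_lift X1 X2 a1 b1 a2 b2 (a : mexp 23) :
  \sum_(z <- antipodal_lift X1 X2 a1 b1 a2 b2) mono_eval a z
  = (1 + (-1) ^+ mdeg a) *
    (a1 ^+ mdeg (mexp_init a) * b1 ^+ a ord_max * \sum_(x <- X1) mono_eval (mexp_init a) x
     + a2 ^+ mdeg (mexp_init a) * b2 ^+ a ord_max * \sum_(x <- X2) mono_eval (mexp_init a) x).
Proof.
have sum_ext X al be : \sum_(x <- X) mono_eval a (ext23 x al be)
    = al ^+ mdeg (mexp_init a) * be ^+ a ord_max * \sum_(x <- X) mono_eval (mexp_init a) x.
  by rewrite big_distrr; apply: eq_bigr => x _; rewrite mono_eval_ext23.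
have sum_extN X al be : \sum_(x <- X) mono_eval a (- ext23 x al be)
    = (-1) ^+ mdeg a * \sum_(x <- X) mono_eval a (ext23 x al be).
  by rewrite big_distrr; apply: eq_bigr => x _; rewrite mono_evalN.
have sum_cat s t (F : 'rV[R]_23 -> R) :
    \sum_(z <- s ++ t) F z = \sum_(z <- s) F z + \sum_(z <- t) F z by rewrite big_cat.
rewrite /antipodal_lift !sum_cat !big_map !sum_extN !sum_ext.
move: (mdeg a) (mdeg (mexp_init a)) (a ord_max) => n j k.
move: (\sum_(x <- X1) _) (\sum_(x <- X2) _) => S1 S2.
ring.
Qed.

Lemma antipodal_lift_mono_sum (X1 X2 : seq 'rV[R]_22) w (a : mexp 23) :
  euclidean_design 6 [:: (1, X1); (Num.sqrt 11, X2)] w ->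
  size X1 = 275%N -> size X2 = 2025%N -> (mdeg a <= 7)%N ->
  \sum_(z <- antipodal_lift X1 X2 (2 / Num.sqrt 5) (1 / Num.sqrt 5)
                           (2 / (3 * Num.sqrt 5)) (1 / (3 * Num.sqrt 5))) mono_eval a z
  = 4600 * sphere_mono_avg R a.
Proof.
move=> des X1_size X2_size deg_a.
have layer m := @layer_moment_identity R X1 X2 w (mexp_init a) m des X1_size X2_size.
have s5_neq0 : Num.sqrt 5 != 0 :> R by rewrite sqrtr_eq0 -ltNge.
have s5_sq : Num.sqrt 5 ^+ 2 = 5 :> R by rewrite sqr_sqrtr.
have s35_neq0 : 3 * Num.sqrt 5 != 0 :> R by rewrite mulf_neq0 // pnatr_eq0.
have s35_sq : (3 * Num.sqrt 5) ^+ 2 = 45 :> R by rewrite exprMn s5_sq; ring.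
have A_odd : odd (mdeg (mexp_init a)) -> sphere_mono_avg R (mexp_init a) = 0.
  exact: sphere_mono_avg_odd.
rewrite sum_mono_eval_antipodal_lift sphere_mono_avg_lift mdeg_init_last.
rewrite mdeg_init_last in deg_a.
move: layer A_odd deg_a.
set j := mdeg _; set k := a ord_max.
set S1 := \sum_(x <- X1) _; set S2 := \sum_(x <- X2) _; set A := sphere_mono_avg R _.
move=> layer A_odd deg_a.
have [jk_odd|jk_even] := boolP (odd (j + k)).
  rewrite -signr_odd jk_odd expr1 subrr mul0r.
  rewrite /lift_avg_factor; have [k_odd|k_even] := boolP (odd k); first by rewrite !mulr0.
  by rewrite A_odd ?mul0r ?mulr0 //; move: jk_odd; rewrite oddD (negbTE k_even) addbF.
have jk_le : (j + k <= 6)%N.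
  by move: deg_a jk_even; rewrite leq_eqVlt ltnS => /orP [/eqP ->|].
rewrite -signr_odd (negbTE jk_even) expr0 !expr_div_mul_even // s5_sq s35_sq.
rewrite -(lift_moment_identity jk_le jk_even A_odd layer).
clearbody j k S1 S2 A; ring.
Qed.

Lemma last_coord_notin (s t : seq 'rV[R]_23) v :
  (forall z, z \in s -> z ord0 ord_max = v) -> (forall z, z \in t -> z ord0 ord_max != v) ->
  ~~ has (fun z => z \in s) t.
Proof.
move=> s_last t_last; apply/hasPn => z zt; apply/negP => zs.
by move: (t_last z zt); rewrite s_last ?eqxx.
Qed.

Lemma last_coord_ext23 (X : seq 'rV[R]_22) al be z :
  z \in [seq ext23 x al be | x <- X] -> z ord0 ord_max = be.
Proof. by move=> /mapP [x _ ->]; rewrite ext23_last. Qed.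

Lemma last_coord_oppr_ext23 (X : seq 'rV[R]_22) al be z :
  z \in [seq - ext23 x al be | x <- X] -> z ord0 ord_max = - be.
Proof. by move=> /mapP [x _ ->]; rewrite mxE ext23_last. Qed.

Lemma map_ext23_uniq (X : seq 'rV[R]_22) al be :
  al != 0 -> uniq X -> uniq [seq ext23 x al be | x <- X].
Proof. by move=> al_neq0; rewrite map_inj_uniq //; apply: ext23_inj. Qed.

Lemma map_oppr_ext23_uniq (X : seq 'rV[R]_22) al be :
  al != 0 -> uniq X -> uniq [seq - ext23 x al be | x <- X].
Proof.
by move=> al_neq0; rewrite map_inj_uniq // => x y /oppr_inj; apply: ext23_inj.
Qed.

Lemma antipodal_lift_uniq (X1 X2 : seq 'rV[R]_22) (a1 b1 a2 b2 : R) :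
  uniq X1 -> uniq X2 -> a1 != 0 -> a2 != 0 -> uniq [:: b1; b2; - b1; - b2] ->
  uniq (antipodal_lift X1 X2 a1 b1 a2 b2).
Proof.
move=> X1_uniq X2_uniq a1_neq0 a2_neq0 /=; rewrite !inE !negb_or.
move=> /and4P [/and3P [b12 b13 b14] /andP [b23 b24] b34 _].
rewrite /antipodal_lift !cat_uniq !map_ext23_uniq ?map_oppr_ext23_uniq //=.
rewrite !has_cat !negb_or andbT; apply/and3P; split.
- apply/and3P; split; apply: (last_coord_notin (v := b1)) => [z /last_coord_ext23 //|z].
  + by move/last_coord_ext23 ->; rewrite eq_sym.
  + by move/last_coord_oppr_ext23 ->; rewrite eq_sym.
  + by move/last_coord_oppr_ext23 ->; rewrite eq_sym.
- apply/andP; split; apply: (last_coord_notin (v := b2)) => [z /last_coord_ext23 //|z].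
  + by move/last_coord_oppr_ext23 ->; rewrite eq_sym.
  + by move/last_coord_oppr_ext23 ->; rewrite eq_sym.
- apply: (last_coord_notin (v := - b1)) => [z /last_coord_oppr_ext23 //|z].
  by move/last_coord_oppr_ext23 ->; rewrite eq_sym.
Qed.

Lemma antipodal_lift_on_sphere (X1 X2 : seq 'rV[R]_22) r (a1 b1 a2 b2 : R) :
  all (on_sphere 1) X1 -> all (on_sphere r) X2 ->
  a1 ^+ 2 + b1 ^+ 2 = 1 -> a2 ^+ 2 * r ^+ 2 + b2 ^+ 2 = 1 ->
  all (on_sphere 1) (antipodal_lift X1 X2 a1 b1 a2 b2).
Proof.
move=> X1_sph X2_sph ab1 ab2.
have on_sph1 x : x \in X1 -> sqnorm x = 1 by move=> /(allP X1_sph) /eqP ->; rewrite expr1n.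
have on_sph2 x : x \in X2 -> sqnorm x = r ^+ 2 by move=> /(allP X2_sph) /eqP.
rewrite /antipodal_lift !all_cat !all_map; apply/and4P; split; apply/allP => x xX;
  rewrite /= /on_sphere ?sqnormN sqnorm_ext23 expr1n.
- by rewrite on_sph1 // mulr1 ab1.
- by rewrite on_sph2 // ab2.
- by rewrite on_sph1 // mulr1 ab1.
- by rewrite on_sph2 // ab2.
Qed.

End AntipodalLift.

Unset Implicit Arguments.

Theorem mainTheorem9 (R : rcfType) (X1 X2 : seq 'rV[R]_22) (w : 'rV[R]_22 -> R) :
  euclidean_design 6 [:: (1, X1); (Num.sqrt 11, X2)] w ->
  size (X1 ++ X2) = 'C(25, 3) ->
  size X1 = 275%N -> size X2 = 2025%N ->
  let a1 := 2 / Num.sqrt 5 in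
  let b1 := 1 / Num.sqrt 5 in
  let a2 := 2 / (3 * Num.sqrt 5) in
  let b2 := 1 / (3 * Num.sqrt 5) in
  let Z := [seq ext23 x a1 b1 | x <- X1] ++ [seq ext23 x a2 b2 | x <- X2]
        ++ [seq - ext23 x a1 b1 | x <- X1] ++ [seq - ext23 x a2 b2 | x <- X2] in
  size Z = 4600%N /\ tight_spherical_design 3 Z.
Proof.
move=> des _ X1_size X2_size a1 b1 a2 b2 Z.
have ZE : Z = antipodal_lift X1 X2 a1 b1 a2 b2 by [].
have Z_size : size Z = 4600%N by rewrite ZE !size_cat !size_map X1_size X2_size.
have [X_uniq /andP [X1_sph X2_sph] _ _] := euclidean_design_two_shells des.
have s5_gt0 : 0 < Num.sqrt 5 :> R by rewrite sqrtr_gt0.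
have s5_sq : Num.sqrt 5 ^+ 2 = 5 :> R by rewrite sqr_sqrtr.
have s5_neq0 : Num.sqrt 5 != 0 :> R by rewrite gt_eqF.
have s35_neq0 : 3 * Num.sqrt 5 != 0 :> R by rewrite mulf_neq0 // pnatr_eq0.
have b1_gt0 : 0 < b1 by rewrite divr_gt0.
have b2_gt0 : 0 < b2 by rewrite divr_gt0 // mulr_gt0.
have b1E : b1 = 3 * b2 by rewrite /b1 /b2; field.
split => //; split; last by rewrite Z_size.
rewrite ZE; apply: spherical_design_monomials => [||| a deg_a].
- by rewrite -size_eq0 Z_size.
- move: X_uniq; rewrite cat_uniq => /and3P [X1_uniq _ X2_uniq].
  apply: antipodal_lift_uniq => //; rewrite ?mulf_neq0 ?invr_eq0 ?pnatr_eq0 //=.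
  by rewrite !inE !negb_or; repeat (apply/andP; split) => //; apply/eqP; lra.
- by apply: antipodal_lift_on_sphere X1_sph X2_sph _ _;
    rewrite /a1 /b1 /a2 /b2 ?sqr_sqrtr // !expr_div_n ?exprMn s5_sq; field.
- by rewrite -ZE Z_size ZE (antipodal_lift_mono_sum des).
Qed.
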